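(* Let $M$ be a monoid of binary relations on a finite set $Q$ and let $e\in M$ be an idempotent. Let $\sigma\neq\tau$ be two distinct strongly connected components of the restriction of $e$ to its set of fixed points, and let $s\in\sigma$, $t\in\tau$. If $(s,t)\in e$, then for every $m\in H(e)$ we have $(t,s)\notin m$, and $(\sigma,\tau)\notin\gamma_e(m)$.
   Context: Monoid of relations: set of relations on $Q$ containing the identity and closed under composition $mn=\{(p,q)\mid\exists r,(p,r)\in m,(r,q)\in n\}$. Fixed point of $e$: $q$ with $(q,q)\in e$. $H(e)$ is the $\mathcal H$-class of $e$ in $M$, a group with identity $e$; $m^{-1}$ is the inverse in this group. For $m\in H(e)$, $\gamma_e(m)$ is the relation on the set $\Gamma$ of strongly connected components of fixed points of $e$ given by $(\rho,\sigma)\in\gamma_e(m)$ iff $(r,s)\in m$ and $(s,r)\in m^{-1}$ for some $r\in\rho$, $s\in\sigma$. *)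

From mathcomp Require Import all_boot.
Set Implicit Arguments. Unset Strict Implicit. Unset Printing Implicit Defensive.

Section Rels.
Variable Q : finType.

Notation relQ := {set (Q * Q)}.

Definition rid : relQ := [set pq | pq.1 == pq.2].

Definition rcomp (m n : relQ) : relQ :=
  [set pq | [exists r, ((pq.1, r) \in m) && ((r, pq.2) \in n)]].

Definition is_rel_monoid (M : {set relQ}) : Prop :=
  rid \in M /\ forall m n, m \in M -> n \in M -> rcomp m n \in M.

(* Green's H-relation in the monoid M: m H e iff mM = eM and Mm = Me *)
Definition in_Hclass (M : {set relQ}) (e m : relQ) : bool :=
  [&& m \in M,
      [exists x in M, exists y in M, (m == rcomp e x) && (e == rcomp m y)] &
      [exists x in M, exists y in M, (m == rcomp x e) && (e == rcomp y m)]].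

(* inverse of m in the group H(e) (default e if none exists) *)
Definition Hinv (M : {set relQ}) (e m : relQ) : relQ :=
  odflt e [pick n | in_Hclass M e n && (rcomp m n == e) && (rcomp n m == e)].

Definition fixpts (e : relQ) : {set Q} := [set q | (q, q) \in e].

Definition restr_fix (e : relQ) : rel Q :=
  fun p q => [&& (p, p) \in e, (q, q) \in e & (p, q) \in e].

Definition scc (e : relQ) (p : Q) : {set Q} :=
  [set q in fixpts e | connect (restr_fix e) p q && connect (restr_fix e) q p].

Definition sccs (e : relQ) : {set {set Q}} := [set scc e p | p in fixpts e].

Definition gamma (M : {set relQ}) (e m : relQ) (rho sg : {set Q}) : bool :=
  [&& rho \in sccs e, sg \in sccs e &
      [exists r in rho, exists s in sg,
         ((r, s) \in m) && ((s, r) \in Hinv M e m)]].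

End Rels.

From mathcomp Require Import all_boot.
Set Implicit Arguments. Unset Strict Implicit. Unset Printing Implicit Defensive.

(* The heart of the argument is a "no return" property of the group H(e):
   if n is in H(e), r is a fixed point of e and (r, u) is in e, then
   (u, r) in n forces (u, r) in e.  Indeed e n = n, so (r, r) is in n and
   hence in every n^k e; since H(e) is a finite group, n^(k+1) e = e for
   some k, and (u, r) in n, (r, r) in n^k e give (u, r) in e.
   With (s, t) in e, (t, s) in e would merge sg and tau, so (t, s) is not
   in m.  For gamma, any r in sg and u in tau satisfy (r, u) in e (walk
   r -> s -> t -> u inside e), so (u, r) cannot lie in the inverse m^-1,
   which is again an element of H(e). *)

Lemma nat_seq_collision (T : finType) (f : nat -> T) :
  exists i j, i < j /\ f i = f j.
Proof.
pose g (k : 'I_#|T|.+1) := f k.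
have /injectivePn[i [j neq_ij eq_gij]] : ~~ injectiveb g.
  apply/injectiveP => inj_g.
  by have := max_card (mem (codom g)); rewrite card_codom // card_ord ltnn.
case: (ltngtP i j) => [lt_ij|lt_ji|/val_inj eq_ij].
- by exists i, j.
- by exists j, i.
- by rewrite eq_ij eqxx in neq_ij.
Qed.

Section RelationMonoids.
Variable Q : finType.
Implicit Types (m n x y e : {set (Q * Q)}) (M : {set {set (Q * Q)}}).

Lemma rcompP m n p q :
  reflect (exists r, (p, r) \in m /\ (r, q) \in n) ((p, q) \in rcomp m n).
Proof.
rewrite inE; apply: (iffP existsP) => [[r /andP[pr rq]]|[r [pr rq]]].
  by exists r.
by exists r; rewrite pr rq.
Qed.

Lemma rcompI m n p r q : (p, r) \in m -> (r, q) \in n -> (p, q) \in rcomp m n.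
Proof. by move=> pr rq; apply/rcompP; exists r. Qed.

Lemma rcompA x y n : rcomp x (rcomp y n) = rcomp (rcomp x y) n.
Proof.
apply/setP => [[p q]]; apply/rcompP/rcompP.
  by move=> [r [pr /rcompP[z [rz zq]]]]; exists z; split => //; apply: rcompI rz.
by move=> [r [/rcompP[z [pz zr]] rq]]; exists z; split => //; apply: rcompI rq.
Qed.

Section HClass.
Variables (M : {set {set (Q * Q)}}) (e : {set (Q * Q)}).
Hypotheses (eM : e \in M) (ee : rcomp e e = e).

Lemma Hclass_left_unit n : in_Hclass M e n -> rcomp e n = n.
Proof.
by case/and3P=> _ /existsP[x /andP[_ /existsP[y /andP[_ /andP[/eqP-> _]]]]] _;
  rewrite rcompA ee.
Qed.

Lemma Hclass_left_divisor n : in_Hclass M e n -> exists y, rcomp y n = e.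
Proof.
by case/and3P=> _ _ /existsP[x /andP[_ /existsP[y /andP[_ /andP[_ /eqP->]]]]];
  exists y.
Qed.

(* The powers n^k e of an element of H(e) come back to e: this is the
   finiteness of the cyclic subgroup generated by n. *)
Lemma Hclass_power_cycle n :
  in_Hclass M e n -> exists k, iter k.+1 (rcomp n) e = e.
Proof.
move=> Hn; pose p k := iter k (rcomp n) e.
have [y yn] := Hclass_left_divisor Hn.
have ep k : rcomp e (p k) = p k.
  by case: k => [|k] //=; rewrite rcompA Hclass_left_unit.
have yp k : rcomp y (p k.+1) = p k by rewrite /= rcompA yn ep.
have back i j : i <= j -> p i = p j -> p (j - i) = e.
  elim: i j => [|i IHi] [|j] // le_ij eq_p.
  by rewrite subSS; apply: IHi => //; rewrite -(yp i) -(yp j) eq_p.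
have [i [j [lt_ij /back]]] := nat_seq_collision p.
by rewrite -(subnSK lt_ij) => /(_ (ltnW lt_ij)); exists (j - i.+1).
Qed.

Lemma Hclass_no_return n r u :
  in_Hclass M e n -> (r, r) \in e -> (r, u) \in e -> (u, r) \in n ->
  (u, r) \in e.
Proof.
move=> Hn rr ru ur; have [k <-] := Hclass_power_cycle Hn.
have rr_n : (r, r) \in n by rewrite -(Hclass_left_unit Hn); apply: rcompI ru ur.
have rr_pow j : (r, r) \in iter j (rcomp n) e.
  by elim: j => [|j IHj] //=; apply: rcompI rr_n IHj.
exact: rcompI ur (rr_pow k).
Qed.

(* The inverse in H(e) lies in H(e) (by default it is e itself). *)
Lemma Hinv_Hclass m : in_Hclass M e (Hinv M e m).
Proof.
rewrite /Hinv; case: pickP => [n /andP[/andP[] //]|_] /=.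
by rewrite /in_Hclass eM /=; apply/andP; split; apply/existsP; exists e;
  rewrite eM /=; apply/existsP; exists e; rewrite eM ee eqxx.
Qed.

End HClass.

Section Components.
Variable e : {set (Q * Q)}.
Hypothesis ee : rcomp e e = e.

Lemma connect_rel p q :
  (p, p) \in e -> connect (restr_fix e) p q -> (p, q) \in e.
Proof.
move=> pp /connectP[s]; elim: s p pp => [|x s IHs] p pp /=; first by move=> _ ->.
case/andP=> /and3P[_ xx px] xs qe.
by rewrite -ee; apply: rcompI px (IHs x xx xs qe).
Qed.

Lemma sccs_fixed sg a : sg \in sccs e -> a \in sg -> (a, a) \in e.
Proof. by case/imsetP=> p _ ->; rewrite !inE => /andP[]. Qed.

Lemma sccs_rep sg a : sg \in sccs e -> a \in sg -> sg = scc e a.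
Proof.
case/imsetP=> p _ ->; rewrite inE => /and3P[_ pa ap].
apply/setP => z; rewrite !inE; case: ((z, z) \in e) => //=.
apply/andP/andP => [[pz zp]|[az za]]; split.
- exact: connect_trans ap pz.
- exact: connect_trans zp pa.
- exact: connect_trans pa az.
- exact: connect_trans za ap.
Qed.

Lemma sccs_connect sg a b :
  sg \in sccs e -> a \in sg -> b \in sg -> connect (restr_fix e) a b.
Proof.
by move=> sg_e a_sg; rewrite (sccs_rep sg_e a_sg) inE => /and3P[].
Qed.

Lemma sccs_edge sg tau s t r u :
  sg \in sccs e -> tau \in sccs e -> s \in sg -> t \in tau ->
  r \in sg -> u \in tau -> (s, t) \in e -> (r, u) \in e.
Proof.
move=> sg_e tau_e s_sg t_tau r_sg u_tau st.
have rs := connect_rel (sccs_fixed sg_e r_sg) (sccs_connect sg_e r_sg s_sg).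
have tu := connect_rel (sccs_fixed tau_e t_tau) (sccs_connect tau_e t_tau u_tau).
by have := rcompI (rcompI rs st) tu; rewrite !ee.
Qed.

Lemma sccs_merge sg tau s t :
  sg \in sccs e -> tau \in sccs e -> s \in sg -> t \in tau ->
  (s, t) \in e -> (t, s) \in e -> sg = tau.
Proof.
move=> sg_e tau_e s_sg t_tau st ts.
have ss := sccs_fixed sg_e s_sg; have tt := sccs_fixed tau_e t_tau.
rewrite (sccs_rep sg_e s_sg) (sccs_rep tau_e t_tau).
have cst : connect (restr_fix e) s t by apply: connect1; rewrite /restr_fix ss tt.
have cts : connect (restr_fix e) t s by apply: connect1; rewrite /restr_fix ss tt.
apply/setP => z; rewrite !inE; case: ((z, z) \in e) => //=.
by apply/andP/andP => [[sz zs]|[tz zt]]; split;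
  do [exact: connect_trans cts sz | exact: connect_trans zs cst
     | exact: connect_trans cst tz | exact: connect_trans zt cts].
Qed.

End Components.

Lemma Hclass_no_back_edge M e n sg tau a b :
  rcomp e e = e -> in_Hclass M e n ->
  sg \in sccs e -> tau \in sccs e -> sg != tau ->
  a \in sg -> b \in tau -> (a, b) \in e -> (b, a) \notin n.
Proof.
move=> ee Hn sg_e tau_e sg_tau a_sg b_tau ab; apply/negP => ba.
have ba_e := Hclass_no_return ee Hn (sccs_fixed sg_e a_sg) ab ba.
by rewrite (sccs_merge sg_e tau_e a_sg b_tau ab ba_e) eqxx in sg_tau.
Qed.

End RelationMonoids.

Theorem mainTheorem8 (Q : finType) (M : {set {set (Q * Q)}}) (e : {set (Q * Q)}) :
  is_rel_monoid M -> e \in M -> rcomp e e = e ->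
  forall (sg tau : {set Q}), sg \in sccs e -> tau \in sccs e -> sg != tau ->
  forall s t : Q, s \in sg -> t \in tau -> (s, t) \in e ->
  forall m, in_Hclass M e m ->
    (t, s) \notin m /\ ~~ gamma M e m sg tau.
Proof.
move=> _ eM ee sg tau sg_e tau_e sg_tau s t s_sg t_tau st m Hm.
split; first exact: Hclass_no_back_edge ee Hm sg_e tau_e sg_tau s_sg t_tau st.
apply/negP => /and3P[_ _ /existsP[r /andP[r_sg /existsP[u /andP[u_tau]]]]].
case/andP=> _ ur; have ru := sccs_edge ee sg_e tau_e s_sg t_tau r_sg u_tau st.
have Hinv_m := Hinv_Hclass eM ee m.
by rewrite (negPf (Hclass_no_back_edge ee Hinv_m sg_e tau_e sg_tau r_sg u_tau ru)) in ur.
Qed.
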